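(* Let $(Q,\mathcal M)$ be a modulated quiver with $Q$ connected, and suppose that every connected component of its complex quiver $\Gamma$ is one-cycle. Then: (1) $Q$ contains at most one cycle; (2) if $Q$ is a tree, then $Q$ contains a chain $v_1-v_2-\cdots-v_n$ with $n\ge2$ such that $\mathcal M(v_1)\ne\mathbb C$, $\mathcal M(v_n)\ne\mathbb C$ and $\mathcal M(v_i)=\mathbb C$ for all $2\le i\le n-1$.
   Context: Quivers $Q=(Q_0,Q_1,s,t)$ are finite; an arrow $\alpha$ goes from $s(\alpha)$ to $t(\alpha)$. A chain in a quiver is a sequence of vertices $u_1-u_2-\cdots-u_n$ together with pairwise distinct arrows $a_1,\dots,a_{n-1}$ such that each $a_k$ goes from $u_k$ to $u_{k+1}$ or from $u_{k+1}$ to $u_k$. A cycle is a cycle (loops included) of the underlying unoriented multigraph; $Q$ is a tree if its underlying graph is a tree. A connected quiver is one-cycle if its underlying (unoriented multi)graph, loops included, contains exactly one cycle. A modulation $\mathcal M$ of $Q$ assigns to each vertex $i$ a division ring $\mathcal M(i)\in\{\mathbb R,\mathbb C,\mathbb H\}$ ($\mathbb H$ the real quaternions) and to each arrow $\alpha$ a simple $\mathcal M(t(\alpha))$-$\mathcal M(s(\alpha))$-bimodule $\mathcal M(\alpha)$ on which $\mathbb R$ acts centrally; $(Q,\mathcal M)$ is a modulated quiver. Up to isomorphism there is exactly one such simple bimodule for each pair of these division rings other than $(\mathbb C,\mathbb C)$, and for $(\mathbb C,\mathbb C)$ there are exactly two: $\mathbb C$ with action $a\cdot z\cdot b=azb$,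 and $\overline{\mathbb C}$, which is $\mathbb C$ as a set with action $a\cdot z\cdot b=az\bar b$. The quiver $\Gamma$ of $(Q,\mathcal M)$: each $i\in Q_0$ with $\mathcal M(i)\in\{\mathbb R,\mathbb H\}$ gives one vertex $i$ of $\Gamma$; each $i$ with $\mathcal M(i)=\mathbb C$ gives two vertices $i,\bar i$. Each arrow $\alpha:i\to j$ of $Q$ gives arrows of $\Gamma$ as follows: if $\mathcal M(i)=\mathcal M(j)\in\{\mathbb R,\mathbb H\}$, one arrow $\alpha:i\to j$; if $\mathcal M(i)=\mathbb C$ and $\mathcal M(j)\in\{\mathbb R,\mathbb H\}$, arrows $\alpha:i\to j$, $\bar\alpha:\bar i\to j$; if $\mathcal M(i)\in\{\mathbb R,\mathbb H\}$ and $\mathcal M(j)=\mathbb C$, arrows $\alpha:i\to j$, $\bar\alpha:i\to\bar j$; if $\{\mathcal M(i),\mathcal M(j)\}=\{\mathbb R,\mathbb H\}$, two arrows $\alpha,\bar\alpha:i\to j$; if $\mathcal M(i)=\mathcal M(j)=\mathbb C$ and $\mathcal M(\alpha)=\mathbb C$, arrows $\alpha:i\to j$, $\bar\alpha:\bar i\to\bar j$; if $\mathcal M(i)=\mathcal M(j)=\mathbb C$ and $\mathcal M(\alpha)=\overline{\mathbb C}$, arrows $\alpha:\bar i\to j$, $\bar\alpha:i\to\bar j$. *)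

From HB Require Import structures.
From mathcomp Require Import all_boot.
Set Implicit Arguments. Unset Strict Implicit. Unset Printing Implicit Defensive.

Record quiver := Quiver {
  vert : finType;
  arr  : finType;
  src  : arr -> vert;
  tgt  : arr -> vert }.

Section Graph.
Variable Q : quiver.

Definition joins (a : arr Q) (x y : vert Q) : bool :=
  ((src a == x) && (tgt a == y)) || ((src a == y) && (tgt a == x)).

Fixpoint walk (u : vert Q) (st : seq (arr Q * vert Q)) : bool :=
  if st is (a, v) :: r then joins a u v && walk v r else true.

(* A chain u_1 - u_2 - ... - u_n: the vertices are u :: map snd st and the
   arrows map fst st, which must be pairwise distinct. *)
Definition chain (u : vert Q) (st : seq (arr Q * vert Q)) : bool :=
  walk u st && uniq (map fst st).

Definition chain_end (u : vert Q) (st : seq (arr Q * vert Q)) : vert Q :=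
  last u (map snd st).

Definition joined (x y : vert Q) : Prop :=
  exists st, chain x st /\ chain_end x st = y.

Definition connected : Prop :=
  (exists x : vert Q, True) /\ forall x y : vert Q, joined x y.

(* A closed chain with at least one arrow, pairwise distinct arrows, and
   pairwise distinct vertices u_1, ..., u_n (u_{n+1} = u_1): a cycle of the
   underlying multigraph (loops: n = 1; two parallel arrows: n = 2). *)
Definition cycle_walk (u : vert Q) (st : seq (arr Q * vert Q)) : bool :=
  [&& st != [::], chain u st, uniq (map snd st) & chain_end u st == u].

Definition is_cycle (E : {set arr Q}) : Prop :=
  exists u st, cycle_walk u st /\ E = [set a | a \in map fst st].

Definition at_most_one_cycle : Prop :=
  forall E1 E2, is_cycle E1 -> is_cycle E2 -> E1 = E2.

Definition no_cycle : Prop := forall E, ~ is_cycle E.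

Definition is_tree : Prop := connected /\ no_cycle.

(* The connected component of x contains exactly one cycle
   (a cycle lies in the component of x iff its arrows are joined to x). *)
Definition component_one_cycle (x : vert Q) : Prop :=
  exists E, [/\ is_cycle E, (forall a, a \in E -> joined x (src a)) &
    forall E', is_cycle E' -> (forall a, a \in E' -> joined x (src a)) ->
      E' = E].

Definition all_components_one_cycle : Prop :=
  forall x : vert Q, component_one_cycle x.

End Graph.

Inductive divring := dR | dC | dH.

Definition divring_eqb (x y : divring) : bool :=
  match x, y with dR, dR | dC, dC | dH, dH => true | _, _ => false end.
Lemma divring_eqP : Equality.axiom divring_eqb.
Proof. by case; case; constructor. Qed.
HB.instance Definition _ := hasDecEq.Build divring divring_eqP.

(* A modulation of Q, up to isomorphism of the data: the division ring
   M i at every vertex, and for every arrow a the isomorphism class of the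
   simple bimodule M(a).  This class is determined by the endpoints except
   when M(src a) = M(tgt a) = C, in which case [cnj a] = true means
   M(a) = Cbar and [cnj a] = false means M(a) = C; [cnj a] is ignored
   otherwise. *)
Record modulation (Q : quiver) := Modulation {
  mdr : vert Q -> divring;
  cnj : arr Q -> bool }.

Section Gamma.
Variables (Q : quiver) (M : modulation Q).
Local Notation D := (mdr M).

(* vertices: (i,false) = i, and (i,true) = ibar, the latter only if M i = C *)
Definition gvert_ok (x : vert Q * bool) : bool := x.2 ==> (D x.1 == dC).
Definition GVert : finType := {x : vert Q * bool | gvert_ok x}.

(* an arrow of Q gives one arrow of Gamma if M(s)=M(t) in {R,H}, two otherwise;
   (a,false) = alpha, (a,true) = alphabar *)
Definition doubled (a : arr Q) : bool :=
  ~~ ((D (src a) == D (tgt a)) && (D (src a) != dC)).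
Definition garr_ok (p : arr Q * bool) : bool := p.2 ==> doubled p.1.
Definition GArr : finType := {p : arr Q * bool | garr_ok p}.

Definition gsrc_flag (a : arr Q) (b : bool) : bool :=
  match D (src a), D (tgt a) with
  | dC, dC => if cnj M a then ~~ b else b   (* C: a:i->j, abar:ibar->jbar;
                                               Cbar: a:ibar->j, abar:i->jbar *)
  | dC, _ => b                               (* a:i->j, abar:ibar->j *)
  | _, _ => false
  end.
Definition gtgt_flag (a : arr Q) (b : bool) : bool :=
  match D (src a), D (tgt a) with
  | dC, dC => b
  | _, dC => b                               (* a:i->j, abar:i->jbar *)
  | _, _ => false
  end.

Lemma gsrc_ok (a : arr Q) (b : bool) : gvert_ok (src a, gsrc_flag a b).
Proof.
rewrite /gvert_ok /gsrc_flag /=; case: (D (src a)); case: (D (tgt a)) => //; by case: (cnj M a); case: b.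
Qed.
Lemma gtgt_ok (a : arr Q) (b : bool) : gvert_ok (tgt a, gtgt_flag a b).
Proof.
rewrite /gvert_ok /gtgt_flag /=; case: (D (src a)); case: (D (tgt a)) => //; by case: b.
Qed.

Definition gsrc (p : GArr) : GVert :=
  exist _ (src (val p).1, gsrc_flag (val p).1 (val p).2)
          (gsrc_ok (val p).1 (val p).2).
Definition gtgt (p : GArr) : GVert :=
  exist _ (tgt (val p).1, gtgt_flag (val p).1 (val p).2)
          (gtgt_ok (val p).1 (val p).2).

Definition Gamma : quiver := Quiver gsrc gtgt.
End Gamma.

From mathcomp Require Import all_boot zify.
Set Implicit Arguments. Unset Strict Implicit. Unset Printing Implicit Defensive.

(* Walks are handled as index functions P : nat -> vertices, A : nat -> arrows
   with A k joining P k and P k.+1; this makes cutting, rotating and reading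
   cycles periodically easy.

   Walks of Q lift to
   Gamma, and since every fibre has at most two points, a cycle of Q lifts to
   a cycle of Gamma going once or twice around it.  For (1), two cycles of Q
   lift into the component of a single vertex of Gamma, whose unique cycle
   projects onto both.  For (2), a cycle of Gamma projects to a closed walk of
   the tree Q that cannot backtrack at complex vertices, because there each
   arrow of Q has a single lift incident to the given vertex of Gamma. *)

Lemma modS_last n k : 0 < n -> n %| k.+1 -> (k %% n).+1 = n.
Proof.
move=> n0 Hd; have hk := ltn_pmod k n0.
have : (k %% n).+1 %% n = 0 by rewrite -addn1 modnDml addn1; apply/eqP.
by case: (ltngtP (k %% n).+1 n) => [lt|gt|->] //; [rewrite modn_small | rewrite ltnNge hk in gt].
Qed.

Lemma modS_neq n k : 1 < n -> k.+1 %% n != k %% n.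
Proof.
move=> n1; have n0 : 0 < n by apply: ltn_trans n1.
rewrite modnS; case: ifP => Hd; last by rewrite eq_sym neq_ltn ltnSn.
by rewrite eq_sym -lt0n -ltnS (modS_last n0 Hd).
Qed.

Lemma modeq_next n i j : 0 < n -> i < j -> j < i + n + n -> i = j %[mod n] -> j = i + n.
Proof.
move=> n0 lij ljn E.
have Ed : (j - i) %% n = 0.
  have : i + (j - i) == i + 0 %[mod n] by rewrite subnKC ?(ltnW lij) // addn0 E.
  by rewrite eqn_modDl mod0n => /eqP.
have := divn_eq (j - i) n; rewrite Ed addn0.
case: ((j - i) %/ n) => [|[|q]]; rewrite ?mul0n ?mul1n => h.
- by move: lij; rewrite -subn_gt0 h.
- by rewrite -h subnKC // ltnW.
- by move: h ljn; rewrite !mulSn; move: (q * n) => t h; clear E Ed; lia.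
Qed.

Lemma periodic_return (T : eqType) (L : nat -> T) n : 0 < n ->
  (forall i j, L i = L j -> i = j %[mod n]) ->
  (forall a t, L a = L (a + n) -> L (a + t) = L (a + n + t)) ->
  [\/ L 0 = L n, L (n + n) = L n | L (n + n) = L 0] ->
  exists s m, [/\ n %| s, n <= m, L (s + m) = L s &
                  forall a b, s < a -> a < b -> b <= s + m -> L a != L b].
Proof.
move=> n0 Lmod Lshift Hret.
have short a b : a < b -> b < a + n -> L a != L b.
  move=> lab lbn; apply/eqP => /Lmod e.
  by have := modeq_next n0 lab (ltn_addr n lbn) e; move: lbn; clear; lia.
case: (eqVneq (L 0) (L n)) => [e0|ne0].
  exists 0, n; split; rewrite ?dvdn0 ?add0n //.
  by move=> a b a0 lab lbn; apply: short => //; lia.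
case: (eqVneq (L n) (L (n + n))) => [e1|ne1].
  exists n, n; split; rewrite ?dvdnn //.
  by move=> a b a0 lab lbn; apply: short => //; lia.
have e2 : L 0 = L (n + n).
  by case: Hret => // e; [rewrite e eqxx in ne0 | rewrite e eqxx in ne1].
exists 0, (n + n); split; rewrite ?dvdn0 ?leq_addr ?add0n //.
move=> a b a0 lab lbn; apply/eqP => e.
have eb : b = a + n by apply: modeq_next n0 lab _ (Lmod _ _ e); lia.
have an : a <= n by move: eb lbn; clear; lia.
have := Lshift a (n - a); rewrite -eb => /(_ e).
rewrite subnKC // (_ : b + (n - a) = n + n); last by move: eb an; clear; lia.
by move=> e'; rewrite e' eqxx in ne1.
Qed.

Section Walks.
Variable Q : quiver.
Implicit Types (P : nat -> vert Q) (A : nat -> arr Q) (x y z : vert Q) (a : arr Q).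

Definition walkfun m P A := forall k, k < m -> joins (A k) (P k) (P k.+1).

Definition steps m P A : seq (arr Q * vert Q) := [seq (A k, P k.+1) | k <- iota 0 m].

Definition reach x y := exists st, walk x st /\ last x (map snd st) = y.

Definition cyclefun m P A :=
  [/\ 0 < m, walkfun m P A, P m = P 0,
      forall i j, 0 < i -> i < j -> j <= m -> P i != P j &
      forall i j, i < j -> j < m -> A i != A j].

Definition arcs m A : {set arr Q} := [set a | a \in map A (iota 0 m)].

Definition no_backtrack m A := forall k, k.+1 < m -> A k != A k.+1.

Lemma arcsP m A a : reflect (exists2 k, k < m & a = A k) (a \in arcs m A).
Proof.
rewrite inE; apply: (iffP mapP) => [[k]|[k hk ->]]; last by exists k; rewrite ?mem_iota.
by rewrite mem_iota => /andP[_ hk] ->; exists k.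
Qed.

Lemma walk_cat x (s1 s2 : seq (arr Q * vert Q)) :
  walk x (s1 ++ s2) = walk x s1 && walk (last x (map snd s1)) s2.
Proof. by elim: s1 x => [|[a v] s IH] x //=; rewrite IH andbA. Qed.

Lemma size_steps m P A : size (steps m P A) = m.
Proof. by rewrite size_map size_iota. Qed.

Lemma map_fst_steps m P A : map fst (steps m P A) = map A (iota 0 m).
Proof. by rewrite -map_comp. Qed.

Lemma map_snd_steps m P A : map snd (steps m P A) = map (fun k => P k.+1) (iota 0 m).
Proof. by rewrite -map_comp. Qed.

Lemma walkfun_steps m P A : walkfun m P A ->
  walk (P 0) (steps m P A) /\ last (P 0) (map snd (steps m P A)) = P m.
Proof.
elim: m => [|m IH] W; first by []; have [W1 W2] := IH (fun k hk => W k (ltnW hk)).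
rewrite /steps -addn1 iotaD map_cat walk_cat map_cat last_cat /= -/(steps m P A).
by rewrite W1 W2 add0n addn1 W.
Qed.

Lemma walk_walkfun (d : vert Q) (a0 : arr Q) x st : walk x st ->
  walkfun (size st) (nth d (x :: map snd st)) (nth a0 (map fst st)).
Proof.
elim: st x => [|[a v] s IH] x //= /andP[J W] [|k] //=.
by rewrite ltnS => hk; apply: IH W k hk.
Qed.

Lemma nth_size_last (T : Type) (d x : T) (s : seq T) : nth d (x :: s) (size s) = last x s.
Proof. by elim: s x => [|y s IH] x //=; rewrite -IH. Qed.

Lemma uniq_map_iota (T : eqType) (f : nat -> T) m :
  (forall i j, i < j -> j < m -> f i != f j) -> uniq (map f (iota 0 m)).
Proof.
move=> H; rewrite map_inj_in_uniq ?iota_uniq // => i j; rewrite !mem_iota /= => hi hj E.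
by case: (ltngtP i j) => // lt; [move: (H _ _ lt hj) | move: (H _ _ lt hi)]; rewrite E eqxx.
Qed.

Lemma nth_uniq_neq (T : eqType) (d : T) s i j :
  uniq s -> i < j -> j < size s -> nth d s i != nth d s j.
Proof. by move=> Us lij ljs; rewrite nth_uniq ?(ltn_trans lij) // neq_ltn lij. Qed.

Lemma joins_same a x y x' y' : joins a x y -> joins a x' y' ->
  (x = x' /\ y = y') \/ (x = y' /\ y = x').
Proof. by rewrite /joins => /orP[]/andP[/eqP<- /eqP<-] /orP[]/andP[/eqP-> /eqP->]; auto. Qed.

Lemma reach_trans x y z : reach x y -> reach y z -> reach x z.
Proof.
move=> [s1 [H1 <-]] [s2 [H2 <-]]; exists (s1 ++ s2).
by rewrite walk_cat H1 H2 map_cat last_cat.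
Qed.

Lemma walkfun_reach m P A k : walkfun m P A -> k <= m -> reach (P 0) (P k).
Proof.
move=> W hk; have [W1 W2] := @walkfun_steps k P A (fun i hi => W i (leq_trans hi hk)).
by exists (steps k P A).
Qed.

Lemma walkfun_src_reach m P A k : walkfun m P A -> k < m -> reach (P 0) (src (A k)).
Proof.
move=> W hk; have := W k hk; rewrite /joins => /orP[]/andP[/eqP-> _].
  exact: walkfun_reach W (ltnW hk).
exact: walkfun_reach W hk.
Qed.

Lemma joined_reach x y : joined x y -> reach x y.
Proof. by case=> st [/andP[W _] <-]; exists st. Qed.

Lemma shorten_walk m P A : walkfun m P A -> exists m' P' A',
  [/\ walkfun m' P' A', P' 0 = P 0, P' m' = P m,
      (forall i j, i < j -> j <= m' -> P' i != P' j) &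
      (forall k, k <= m' -> exists2 k0, k0 <= m & P' k = P k0)].
Proof.
elim/ltn_ind: m P A => m IH P A W.
case: (boolP [exists i : 'I_m.+1, exists j : 'I_m.+1, (i < j) && (P i == P j)]).
- case/existsP=> [[i hi]] /existsP[[j hj]] /= /andP[lij /eqP Eij].
  (* cut out the closed subwalk from P i to P j *)
  pose d := j - i.
  pose P2 k := if k <= i then P k else P (k + d).
  pose A2 k := if k < i then A k else A (k + d).
  have lt : m - d < m by lia.
  have W2 : walkfun (m - d) P2 A2.
    move=> k hk; rewrite /P2 /A2; case: (ltngtP k i) => [lki|lik|eki].
    + by apply: W; lia.
    + by rewrite addSn; apply: W; lia.
    + by subst k; rewrite addSn (_ : i + d = j) ?Eij; [apply: W|]; lia.
  have [m' [P' [A' [W' E0 Em In Sub]]]] := IH _ lt P2 A2 W2.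
  exists m', P', A'; split => //.
  + rewrite Em /P2; case: ifP => Hc; last by congr P; lia.
    by rewrite (_ : m - d = i) ?Eij; [congr P|]; lia.
  + move=> k hk; have [k0 hk0 ->] := Sub k hk; rewrite /P2.
    by case: ifP => Hc; [exists k0 | exists (k0 + d)] => //; lia.
- rewrite negb_exists => /forallP Hn.
  exists m, P, A; split => // [i j lij ljm|k hk]; last by exists k.
  have ljm' : j < m.+1 by [].
  have := Hn (Ordinal (leq_ltn_trans (ltnW lij) ljm')).
  by rewrite negb_exists => /forallP/(_ (Ordinal ljm')) /=; rewrite lij.
Qed.

Lemma steps_chain m P A : walkfun m P A ->
  (forall i j, i < j -> j <= m -> P i != P j) -> chain (P 0) (steps m P A).
Proof.
move=> W In; rewrite /chain (walkfun_steps W).1 map_fst_steps.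
apply: uniq_map_iota => i j lij ljm; apply/eqP => E.
have Hi := W i (ltn_trans lij ljm); rewrite E in Hi.
case: (joins_same Hi (W j ljm)) => [[E1 _]|[E1 _]].
  by move: (In i j lij (ltnW ljm)); rewrite E1 eqxx.
by move: (In i j.+1 (ltnW lij) ljm); rewrite E1 eqxx.
Qed.

Lemma walkfun_chain m P A : walkfun m P A -> exists st,
  [/\ chain (P 0) st, chain_end (P 0) st = P m &
      forall v, v \in take (size st).-1 (map snd st) -> exists2 k, 0 < k < m & v = P k].
Proof.
move=> W; have [m' [P' [A' [W' E0 Em In Sub]]]] := shorten_walk W.
exists (steps m' P' A'); rewrite -E0; split; first exact: steps_chain.
  by rewrite /chain_end (walkfun_steps W').2.
move=> v; rewrite size_steps map_snd_steps -map_take take_iota.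
case/mapP=> k; rewrite mem_iota => /andP[_ hk] ->.
have hk' : k.+1 < m' by move: hk; clear; lia.
have [k0 hk0 ek] := Sub k.+1 (ltnW hk'); exists k0 => //.
case: (posnP k0) => [z|_]; first by move: (In 0 k.+1 isT (ltnW hk')); rewrite ek E0 z eqxx.
rewrite /= ltn_neqAle hk0 andbT; apply: contraTneq (In k.+1 m' hk' (leqnn _)) => e.
by rewrite ek Em e eqxx.
Qed.

Lemma reach_joined x y : reach x y -> joined x y.
Proof.
case=> [[|[a0 v] s] [W <-]]; first by exists [::].
have [st [C Ce _]] := walkfun_chain (walk_walkfun x a0 W).
by exists st; rewrite Ce -(size_map snd) nth_size_last.
Qed.

Lemma cycle_arcs m P A : cyclefun m P A -> is_cycle (arcs m A).
Proof.
case=> m0 W Pm Iv Ia; exists (P 0), (steps m P A); split; last by rewrite map_fst_steps.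
rewrite /cycle_walk /chain (walkfun_steps W).1 -size_eq0 size_steps -lt0n m0.
rewrite map_fst_steps map_snd_steps /chain_end (walkfun_steps W).2 Pm eqxx.
by rewrite !uniq_map_iota // => i j lij ljm; apply: Iv.
Qed.

Lemma cycleP E : is_cycle E -> exists m P A, cyclefun m P A /\ E = arcs m A.
Proof.
case=> u [[|[a0 v] s] [/and4P[//= _ /andP[W Ua] Us /eqP Hend] ->]].
set st := (a0, v) :: s in W Ua Us Hend *.
exists (size st), (nth u (u :: map snd st)), (nth a0 (map fst st)); split.
  split=> //; first exact: walk_walkfun.
  - by rewrite -(size_map snd) nth_size_last.
  - move=> [//|i] [//|j] _ lij ljn.
    by apply: (@nth_uniq_neq _ u (map snd st)); rewrite ?size_map.
  - by move=> i j lij ljn; apply: nth_uniq_neq; rewrite ?size_map.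
by apply/setP => a; rewrite /arcs -(size_map fst) -/(mkseq _ _) mkseq_nth.
Qed.

Lemma cyclefun_vinj n P A i j : cyclefun n P A -> i < n -> j < n -> P i = P j -> i = j.
Proof.
case=> _ _ Pn Iv _ hi hj e.
have neq k l : k < l -> l < n -> P k != P l.
  case: k => [|k] lkl lln; last by apply: Iv => //; apply: ltnW.
  by rewrite -Pn eq_sym; apply: Iv => //; apply: ltnW.
by case: (ltngtP i j) => // lt; [move: (neq _ _ lt hj) | move: (neq _ _ lt hi)]; rewrite e eqxx.
Qed.

Lemma cyclefun_ainj n P A i j : cyclefun n P A -> i < n -> j < n -> A i = A j -> i = j.
Proof.
case=> _ _ _ _ Ia hi hj e; case: (ltngtP i j) => // lt.
  by move: (Ia _ _ lt hj); rewrite e eqxx.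
by move: (Ia _ _ lt hi); rewrite e eqxx.
Qed.

Lemma cyclefun_periodic n P A : cyclefun n P A ->
  forall k, joins (A (k %% n)) (P (k %% n)) (P (k.+1 %% n)).
Proof.
case=> n0 W Pn _ _ k; have hk := ltn_pmod k n0.
rewrite modnS; case: ifP => Hd; last exact: W.
by have := W _ hk; rewrite (modS_last n0 Hd) Pn.
Qed.

(* In a quiver without loops, consecutive arrows of a cycle read
   periodically are distinct (a cycle of length 1 would be a loop). *)
Lemma cyclefun_next_neq n P A : cyclefun n P A -> (forall a, src a != tgt a) ->
  forall k, A (k %% n) != A (k.+1 %% n).
Proof.
move=> cP NL k; have [n0 W Pn _ _] := cP.
case: (ltngtP n 1) => [n1|n1|n1]; first by move: n0 n1; clear; lia.
  apply: contra_neq (modS_neq k n1) => /(cyclefun_ainj cP (ltn_pmod _ n0) (ltn_pmod _ n0)).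
  by move->.
subst n; have := W 0 n0; rewrite Pn /joins.
by case/orP=> /andP[/eqP e1 /eqP e2]; move: (NL (A 0)); rewrite e1 e2 eqxx.
Qed.

Lemma walkfun_in_component x m P A : reach x (P 0) -> walkfun m P A ->
  forall a, a \in arcs m A -> joined x (src a).
Proof.
move=> R W a /arcsP[k hk ->].
exact/reach_joined/(reach_trans R)/(walkfun_src_reach W hk).
Qed.

(* A closed walk that never backtracks contains a cycle: cut it at a repeated
   vertex, or, if there is none, it is itself a cycle. *)
Lemma nb_cycle m P A : 0 < m -> walkfun m P A -> P m = P 0 -> no_backtrack m A ->
  exists E : {set arr Q}, is_cycle E.
Proof.
elim/ltn_ind: m P A => m IH P A m0 W Pm Hnb.
case: (boolP [exists i : 'I_m.+1, exists j : 'I_m.+1, [&& 0 < i, i < j & P i == P j]]).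
- case/existsP=> [[i hi]] /existsP[[j hj]] /= /and3P[i0 lij /eqP Eij].
  apply: (IH (j - i) _ (fun k => P (i + k)) (fun k => A (i + k))).
  + by move: i0 lij hj; clear; lia.
  + by rewrite subn_gt0.
  + by move=> k hk; rewrite addnS; apply: W; lia.
  + by rewrite addn0 subnKC ?Eij // ltnW.
  + by move=> k hk; rewrite addnS; apply: Hnb; lia.
- rewrite negb_exists => /forallP Hn.
  have Iv : forall i j, 0 < i -> i < j -> j <= m -> P i != P j.
    move=> i j i0 lij ljm; have ljm' : j < m.+1 by [].
    have := Hn (Ordinal (leq_ltn_trans (ltnW lij) ljm')).
    by rewrite negb_exists => /forallP/(_ (Ordinal ljm')) /=; rewrite i0 lij.
  exists (arcs m A); apply: (@cycle_arcs m P); split => // i j lij ljm; apply/eqP => E.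
  have Hi := W i (ltn_trans lij ljm); rewrite E in Hi.
  case: (joins_same Hi (W j ljm)) => [[_ E1]|[_ E1]].
    by move: (Iv i.+1 j.+1 isT lij ljm); rewrite E1 eqxx.
  have [lt|ge] := ltnP i.+1 j; first by move: (Iv i.+1 j isT lt (ltnW ljm)); rewrite E1 eqxx.
  have eij : j = i.+1 by apply/eqP; rewrite eqn_leq ge lij.
  by move: (Hnb i); rewrite -eij E eqxx => /(_ ljm).
Qed.

(* A loop is a cycle, so forests have no loops. *)
Lemma noloop : no_cycle Q -> forall a, src a != tgt a.
Proof.
move=> Hn a; apply/negP => /eqP E; apply: (Hn [set b | b \in [:: a]]).
exists (src a), [:: (a, tgt a)]; split => //.
by rewrite /cycle_walk /chain /chain_end /= /joins !eqxx E eqxx.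
Qed.

(* In a forest, a closed walk that does not backtrack at the vertices
   satisfying c must pass through a vertex outside c; between two consecutive
   such visits it then yields a chain whose ends avoid c and whose inner
   vertices satisfy c. *)
Lemma special_chain (c : pred (vert Q)) n P A : no_cycle Q -> 0 < n ->
  (forall k, joins (A k) (P k) (P k.+1)) -> (forall k, P (k + n) = P k) ->
  (forall k, c (P k.+1) -> A k != A k.+1) ->
  exists u st, [/\ chain u st, st != [::], ~~ c u, ~~ c (chain_end u st) &
                   all c (take (size st).-1 (map snd st))].
Proof.
move=> Hnc n0 HJ Hper Hnb.
have W s m : walkfun m (fun k => P (s + k)) (fun k => A (s + k)).
  by move=> k _; rewrite addnS; apply: HJ.
have [s Ds] : exists s, ~~ c (P s).
  case: (boolP [forall k : 'I_n, c (P k)]) => [/forallP allc|]; last first.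
    by rewrite negb_forall => /existsP[k Dk]; exists k.
  have Pn : P (0 + n) = P (0 + 0) by rewrite add0n addn0 -{1}[n]add0n Hper.
  have nb : no_backtrack n (fun k => A (0 + k)).
    by move=> k hk; apply: Hnb; rewrite add0n; exact: (allc (Ordinal hk)).
  by have [E /Hnc] := nb_cycle n0 (W 0 n) Pn nb.
have ex_j : exists j, (0 < j) && ~~ c (P (s + j)) by exists n; rewrite n0 Hper.
case: (ex_minnP ex_j) => j /andP[j0 Dj] jmin.
have inner k : 0 < k < j -> c (P (s + k)).
  by case/andP=> k0 kj; apply/negPn/negP => Dk; move: (jmin k); rewrite k0 Dk leqNgt kj => /(_ isT).
have Hsj : P s != P (s + j).
  apply/eqP => e; have Pj : P (s + j) = P (s + 0) by rewrite addn0.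
  have nb : no_backtrack j (fun k => A (s + k)).
    by move=> k hk; rewrite addnS; apply: Hnb; rewrite -addnS; apply: inner; rewrite hk.
  by have [E /Hnc] := nb_cycle j0 (W s j) Pj nb.
have [st [C Ce Cin]] := walkfun_chain (W s j); rewrite addn0 in C Ce.
exists (P s), st; split => //.
- by apply/eqP => st0; move: Hsj; rewrite -Ce st0 /= eqxx.
- by rewrite Ce.
by apply/allP => v /Cin[k /inner ? ->].
Qed.
End Walks.

Section Lift.
Variables (Q : quiver) (M : modulation Q).
Local Notation D := (mdr M).
Local Notation GV := (GVert M).
Local Notation GA := (GArr M).
Local Notation G := (Gamma M).

Definition pv (x : GV) : vert Q := (val x).1.
Definition pa (b : GA) : arr Q := (val b).1.

Lemma G_joins_proj (b : GA) (x y : GV) : @joins G b x y -> joins (pa b) (pv x) (pv y).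
Proof. by rewrite /joins /= => /orP[]/andP[/eqP<- /eqP<-]; rewrite /pv /= !eqxx ?orbT. Qed.

Lemma Gamma_noloop : (forall a : arr Q, src a != tgt a) -> forall b : GA, @src G b != @tgt G b.
Proof. by move=> NL b; apply: contra (NL (pa b)) => /eqP/(congr1 pv)/eqP. Qed.

Lemma gsrc_flag_inj a b1 b2 : D (src a) = dC -> gsrc_flag M a b1 = gsrc_flag M a b2 -> b1 = b2.
Proof. by rewrite /gsrc_flag => ->; case: (D (tgt a)); case: (cnj M a); case: b1; case: b2. Qed.

Lemma gtgt_flag_inj a b1 b2 : D (tgt a) = dC -> gtgt_flag M a b1 = gtgt_flag M a b2 -> b1 = b2.
Proof. by rewrite /gtgt_flag => ->; case: (D (src a)); case: b1; case: b2. Qed.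

(* At a vertex of Gamma over a C-vertex, distinct incident arrows have
   distinct projections (a non-loop arrow of Q has one lift at each of i, ibar). *)
Lemma proj_inj_at_C (b1 b2 : GA) (x w z : GV) : @joins G b1 x w -> @joins G b2 w z ->
  pa b1 = pa b2 -> D (pv w) = dC -> src (pa b1) != tgt (pa b1) -> b1 = b2.
Proof.
move=> J1 J2 Ep Dw NL.
have I1 : (@src G b1 == w) || (@tgt G b1 == w).
  by case/orP: J1 => /andP[h1 h2]; rewrite ?h1 ?h2 ?orbT.
have I2 : (@src G b2 == w) || (@tgt G b2 == w).
  by case/orP: J2 => /andP[h1 h2]; rewrite ?h1 ?h2 ?orbT.
move: b1 b2 Ep NL I1 I2 {J1 J2} => [[a1 f1] h1] [[a2 f2] h2].
rewrite /pa /= => Ep NL; subst a2 => I1 I2.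
suff ef : f1 = f2 by subst f2; congr exist; apply: bool_irrelevance.
move: I1 I2; case: w Dw => [[u f] hw]; rewrite /pv /= => Du.
rewrite /= /gsrc /gtgt -!val_eqE /= !xpair_eqE.
case/orP=> /andP[/eqP e1 /eqP e1'] /orP[] /andP[/eqP e2 /eqP e2'].
- by apply: (gsrc_flag_inj (a:=a1)); [rewrite e1 | rewrite e1' e2'].
- by move: NL; rewrite e1 e2 eqxx.
- by move: NL; rewrite e1 e2 eqxx.
- by apply: (gtgt_flag_inj (a:=a1)); [rewrite e1 | rewrite e1' e2'].
Qed.

(* The lift of the arrow a of Q at a vertex x of Gamma over one of its ends:
   [lifta a x] is the arrow over a incident to x, [liftv a x] its other end,
   and [lend a x] the end that is x itself. *)
Definition liftb (a : arr Q) (x : GV) : bool :=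
  if src a == pv x then
    (if D (src a) == dC then (if (D (tgt a) == dC) && cnj M a then ~~ (val x).2 else (val x).2)
     else false)
  else (if D (tgt a) == dC then (val x).2 else false).

Lemma liftb_ok a x : garr_ok M (a, liftb a x).
Proof.
rewrite /garr_ok /doubled /liftb /=; case: ifP => _;
  case: (D (src a)); case: (D (tgt a)) => //=; by rewrite implybT.
Qed.

Definition lifta a x : GA := exist _ (a, liftb a x) (liftb_ok a x).
Definition liftv a x : GV := if src a == pv x then gtgt (lifta a x) else gsrc (lifta a x).
Definition lend a x : GV := if src a == pv x then gsrc (lifta a x) else gtgt (lifta a x).

Lemma lend_eq a x v : joins a (pv x) v -> lend a x = x.
Proof.
case: x => [[u f] hx]; rewrite /lend /pv /= => J; rewrite /pv /= in J.
case: ifP => Hs; apply: val_inj => /=.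
- rewrite /gsrc_flag /liftb /pv /= Hs (eqP Hs); congr pair.
  move: hx; rewrite /gvert_ok /=.
  by case: (D u); case: (D (tgt a)); case: (cnj M a); case: f.
- have Ht : tgt a = u.
    by case/orP: J => /andP[/eqP h1 /eqP h2] //; rewrite h1 eqxx in Hs.
  rewrite /gtgt_flag /liftb /pv /= Hs Ht; congr pair.
  move: hx; rewrite /gvert_ok /=.
  by case: (D u); case: (D (src a)); case: f.
Qed.

Lemma lift_joins a x v : joins a (pv x) v ->
  @joins G (lifta a x) x (liftv a x) /\ pv (liftv a x) = v.
Proof.
move=> J; have E := lend_eq J; move: E; rewrite /lend /liftv /joins /=.
case: ifP => Hs E; split.
- by rewrite E !eqxx.
- case/orP: J => /andP[/eqP h1 /eqP h2]; first by rewrite /pv /= h2.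
  by rewrite /pv /= h2 -(eqP Hs) h1.
- by rewrite E !eqxx orbT.
- case/orP: J => /andP[/eqP h1 /eqP h2]; last by rewrite /pv /= h1.
  by rewrite h1 eqxx in Hs.
Qed.

Lemma liftv_det a x y : lifta a x = lifta a y -> pv x = pv y -> liftv a x = liftv a y.
Proof. by rewrite /liftv => -> ->. Qed.

Lemma fiber_two (x y z : GV) : pv x = pv z -> pv y = pv z -> [\/ x = z, y = z | y = x].
Proof.
case: x y z => [[a1 f1] h1] [[a2 f2] h2] [[a3 f3] h3]; rewrite /pv /= => e1 e2.
subst a1 a2.
have E g g' (h : gvert_ok M (a3, g)) (h' : gvert_ok M (a3, g')) :
    g = g' -> (exist _ (a3, g) h : GV) = exist _ (a3, g') h'.
  by move=> e; subst g'; congr exist; apply: bool_irrelevance.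
have [] : [\/ f1 = f3, f2 = f3 | f2 = f1].
  by case: f1 f2 f3 {h1 h2 h3} => [] [] []; by [constructor 1 | constructor 2 | constructor 3].
- by move/E=> e; apply: Or31; apply: e.
- by move/E=> e; apply: Or32; apply: e.
- by move/E=> e; apply: Or33; apply: e.
Qed.

Fixpoint LV (A : nat -> arr Q) (x : GV) k : GV :=
  if k is k'.+1 then liftv (A k') (LV A x k') else x.
Definition LA A x k := lifta (A k) (LV A x k).

Lemma LV_proj m P A x : walkfun m P A -> pv x = P 0 ->
  forall k, k <= m -> pv (LV A x k) = P k.
Proof.
move=> W Hx; elim=> [|k IH] hk //=.
have J := W k hk; rewrite -(IH (ltnW hk)) in J; exact: (lift_joins J).2.
Qed.

Lemma LV_walk m P A x : walkfun m P A -> pv x = P 0 -> @walkfun G m (LV A x) (LA A x).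
Proof.
move=> W Hx k hk /=.
have J := W k hk; rewrite -(LV_proj W Hx (ltnW hk)) in J; exact: (lift_joins J).1.
Qed.

(* The lift of an n-periodic walk is determined by its position: once it
   repeats with lag n it keeps repeating. *)
Lemma LV_shift A x n : (forall k, A (k + n) = A k) ->
  forall a t, LV A x a = LV A x (a + n) -> LV A x (a + t) = LV A x (a + n + t).
Proof.
move=> Hp a t E; elim: t => [|t IH]; first by rewrite !addn0.
by rewrite !addnS /= IH; congr liftv; rewrite addnAC Hp.
Qed.

Lemma lift_reach u v (x : GV) : reach u v -> pv x = u -> exists y, @reach G x y /\ pv y = v.
Proof.
case=> [[|[a0 w] s] [W <-]] Hx; first by exists x; split; [exists [::] | ].
have Wf := walk_walkfun u a0 W; set st := _ :: _ in W Wf.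
exists (LV (nth a0 (map fst st)) x (size st)); split.
  exact: walkfun_reach (LV_walk Wf Hx) (leqnn _).
by rewrite (LV_proj Wf Hx (leqnn _)) -(size_map snd) nth_size_last.
Qed.

(* A cycle of Q lifts, from any vertex x over its base point, to a cycle of
   Gamma reachable from x that goes once or twice around it: the lifted walk
   repeats only with lag n, and the fibre over P 0 has at most two points. *)
Lemma cycle_lift n P A (x : GV) : cyclefun n P A -> pv x = P 0 ->
  exists m (L : nat -> GV) (B : nat -> GA),
    [/\ @cyclefun G m L B, @reach G x (L 0) & pa @: @arcs G m B = arcs n A].
Proof.
move=> cP Hx; have [n0 _ _ _ _] := cP.
pose Pp k := P (k %% n); pose Ap k := A (k %% n).
have Wp m : walkfun m Pp Ap by move=> k _; exact: cyclefun_periodic cP k.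
have Hx' : pv x = Pp 0 by rewrite /Pp mod0n.
pose L := LV Ap x; pose B := LA Ap x.
have HL k : pv (L k) = Pp k := LV_proj (Wp k) Hx' (leqnn k).
have HB k : @joins G (B k) (L k) (L k.+1) := LV_walk (Wp k.+1) Hx' (ltnSn k).
have modP i j : Pp i = Pp j -> i = j %[mod n].
  exact: cyclefun_vinj cP (ltn_pmod i n0) (ltn_pmod j n0).
have modA i j : Ap i = Ap j -> i = j %[mod n].
  exact: cyclefun_ainj cP (ltn_pmod i n0) (ltn_pmod j n0).
have Lmod i j : L i = L j -> i = j %[mod n] by move=> e; apply: modP; rewrite -!HL e.
have Aper k : Ap (k + n) = Ap k by rewrite /Ap modnDr.
have Lfib : [\/ L 0 = L n, L (n + n) = L n | L (n + n) = L 0].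
  by apply: fiber_two; rewrite !HL /Pp ?modnDl ?modnn ?mod0n.
have [s [m [ns nm Lm Linj]]] := periodic_return n0 Lmod (LV_shift (x := x) Aper) Lfib.
exists m, (fun k => L (s + k)), (fun k => B (s + k)); split.
- split; first exact: leq_trans n0 nm.
  + by move=> k _; rewrite addnS; apply: HB.
  + by rewrite addn0.
  + by move=> i j i0 lij ljm; apply: Linj; lia.
  + move=> i j lij ljm; apply/eqP => e.
    have eA : Ap (s + i) = Ap (s + j) := congr1 pa e.
    have eP : pv (L (s + i)) = pv (L (s + j)) by rewrite !HL /Pp (modA _ _ eA).
    move: e; rewrite /B /LA eA => /liftv_det/(_ eP) e.
    have e' : L (s + i).+1 = L (s + j).+1 by rewrite /L /= eA.
    have : L (s + i).+1 != L (s + j).+1 by apply: Linj; lia.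
    by rewrite e' eqxx.
- by rewrite addn0; apply: walkfun_reach (LV_walk (Wp s) Hx') (leqnn s).
- apply/setP => a; apply/imsetP/arcsP => [[b /arcsP[k hk ->] ->]|[k hk ->]].
    by exists ((s + k) %% n); rewrite ?ltn_pmod.
  exists (B (s + k)); first by apply/arcsP; exists k => //; apply: leq_trans nm.
  by rewrite /pa /= /Ap -modnDml (eqP ns) add0n modn_small.
Qed.

(* If Q is a forest, the shadow in Q of a cycle of Gamma is a closed walk
   that cannot backtrack at C-vertices, hence yields the chain of part (2). *)
Lemma Gamma_cycle_special_chain m (W : nat -> GV) (B : nat -> GA) :
  no_cycle Q -> @cyclefun G m W B ->
  exists u st, [/\ chain u st, st != [::], D u != dC, D (chain_end u st) != dC &
                   all (fun v => D v == dC) (take (size st).-1 (map snd st))].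
Proof.
move=> Hnc cW; have [m0 _ _ _ _] := cW; have NL := noloop Hnc.
apply: (special_chain (c := fun v => D v == dC) (n := m)
          (P := fun k => pv (W (k %% m))) (A := fun k => pa (B (k %% m)))) => //.
- by move=> k; apply: G_joins_proj; apply: cyclefun_periodic cW k.
- by move=> k; rewrite modnDr.
- move=> k /eqP Dk; apply: contra (cyclefun_next_neq cW (Gamma_noloop NL) k) => /eqP e.
  apply/eqP; exact: proj_inj_at_C (cyclefun_periodic cW k) (cyclefun_periodic cW k.+1) e Dk (NL _).
Qed.
End Lift.

Theorem lemma6p3 (Q : quiver) (M : modulation Q) :
  connected Q ->
  all_components_one_cycle (Gamma M) ->
  at_most_one_cycle Q /\
  (is_tree Q ->
   exists (u : vert Q) (st : seq (arr Q * vert Q)),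
     [/\ chain u st, st != [::],
         mdr M u != dC, mdr M (chain_end u st) != dC &
         all (fun v => mdr M v == dC) (take (size st).-1 (map snd st))]).
Proof.
move=> [[u0 _] Hc] Hall; split.
- (* two cycles of Q lift to cycles of Gamma in one component, hence coincide *)
  move=> E1 E2 /cycleP[n1 [P1 [A1 [c1 ->]]]] /cycleP[n2 [P2 [A2 [c2 ->]]]].
  pose x1 : GVert M := exist _ (P1 0, false) isT.
  have [x2 [R12 Hx2]] := lift_reach (joined_reach (Hc (P1 0) (P2 0))) (erefl : pv x1 = P1 0).
  have [m1 [L1 [B1 [d1 R1 <-]]]] := cycle_lift c1 (erefl : pv x1 = P1 0).
  have [m2 [L2 [B2 [d2 R2 <-]]]] := cycle_lift c2 Hx2.
  have [E [_ _ UE]] := Hall x1; have [_ W1 _ _ _] := d1; have [_ W2 _ _ _] := d2.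
  rewrite (UE _ (cycle_arcs d1) (walkfun_in_component R1 W1)).
  by rewrite (UE _ (cycle_arcs d2) (walkfun_in_component (reach_trans R12 R2) W2)).
- (* the component of any vertex of Gamma contains a cycle *)
  move=> [_ Hnc].
  have [E [/cycleP[m [W [B [cW _]]]] _ _]] := Hall (exist _ (u0, false) isT : GVert M).
  exact: Gamma_cycle_special_chain Hnc cW.
Qed.
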